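(* Let $0 < q < 1$ be real and let $d \geq 3$, $1 \leq r < \frac d2$ be integers. Let $E_1, E_2, \dots$ be independent events with $\mathbf{P}(E_j) = \frac{q^j}{1+q^j}$, let $F_j$ be the complement of $E_j$, and write $E_n^k := E_{nd+k}$, $F_n^k := F_{nd+k}$ (juxtaposition of events denotes intersection). Define \begin{align*} U_{d,r} &:= \bigcap_{n\geq0}\left(E_n^r F_n^{d-r} F_{n+1}^0 \cup F_n^r\right)\left(E_n^{d-r} F_{n+1}^0 F_{n+1}^r \cup F_n^{d-r}\right)\left(E_{n+1}^0 F_{n+1}^r F_{n+1}^{d-r} F_{n+2}^0 \cup F_{n+1}^0\right),\\ V_{d,r} &:= \bigcap_{n\geq1}\left(E_n^r F_n^{d-r} F_{n+1}^0 \cup F_n^r\right)\left(E_n^{d-r} F_{n+1}^0 F_{n+1}^r \cup F_n^{d-r}\right)\left(E_{n+1}^0 F_{n+1}^r F_{n+1}^{d-r} F_{n+2}^0 \cup F_{n+1}^0\right). \end{align*} Then (1) $\displaystyle \mathbf{P}(U_{d,r} \mid V_{d,r}) = \frac{1}{(1+q^r)(1+q^{d-r})(1+q^d)} \cdot \frac{1}{g_3\left(-q^r;q^d\right)}$; (2) $\mathbf{P}(F_r \cap F_{d-r} \cap F_d \mid U_{d,r}) = g_3\left(-q^r; q^d\right)$.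
   Context: $(a;q)_n := \prod_{j=0}^{n-1}(1-aq^j)$ and $g_3(x;q) := \sum_{n\geq0}\frac{q^{n(n+1)}}{(x;q)_{n+1}(x^{-1}q;q)_{n+1}}$ is Hickerson's universal mock theta function. *)

From HB Require Import structures.
From mathcomp Require Import all_boot all_order all_algebra.
From mathcomp Require Import all_classical all_reals all_analysis.
Set Implicit Arguments. Unset Strict Implicit. Unset Printing Implicit Defensive.
Import Order.TTheory GRing.Theory Num.Theory.
Import numFieldNormedType.Exports.
Local Open Scope classical_set_scope.
Local Open Scope ring_scope.

Definition pr d (T : measurableType d) (R : realType) (P : probability T R)
  (A : set T) : R := fine (P A).

Definition condpr d (T : measurableType d) (R : realType) (P : probability T R)
  (A B : set T) : R := pr P (A `&` B) / pr P B.

Definition indep_events_pos d (T : measurableType d) (R : realType)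
  (P : probability T R) (E : nat -> set T) : Prop :=
  forall s : seq nat, uniq s -> all (fun i => (0 < i)%N) s ->
    pr P (\bigcap_(i in [set` s]) E i) = \prod_(i <- s) pr P (E i).

Definition qpoch (R : ringType) (a q : R) (n : nat) : R :=
  \prod_(j < n) (1 - a * q ^+ j).

Definition g3_term (R : fieldType) (x q : R) (n : nat) : R :=
  q ^+ (n * n.+1) / (qpoch x q n.+1 * qpoch (x^-1 * q) q n.+1).

Definition g3 (R : realType) (x q : R) : R := limn (series (g3_term x q)).

Definition UV_block T (E : nat -> set T) (d r n : nat) : set T :=
  let Ev n k := E (n * d + k)%N in
  let Fv n k := ~` E (n * d + k)%N in
  ((Ev n r `&` Fv n (d - r)%N `&` Fv n.+1 0%N) `|` Fv n r) `&`
  ((Ev n (d - r)%N `&` Fv n.+1 0%N `&` Fv n.+1 r) `|` Fv n (d - r)%N) `&`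
  ((Ev n.+1 0%N `&` Fv n.+1 r `&` Fv n.+1 (d - r)%N `&` Fv n.+2 0%N)
     `|` Fv n.+1 0%N).

Definition Uevt T (E : nat -> set T) (d r : nat) : set T :=
  \bigcap_(n in [set: nat]) UV_block E d r n.

Definition Vevt T (E : nat -> set T) (d r : nat) : set T :=
  \bigcap_(n in [set n : nat | (1 <= n)%N]) UV_block E d r n.

From HB Require Import structures.
From mathcomp Require Import all_boot all_order all_algebra.
From mathcomp Require Import all_classical all_reals all_analysis.
From mathcomp Require Import ring lra zify.
Import Order.TTheory GRing.Theory Num.Theory.
Import numFieldNormedType.Exports.
Local Open Scope classical_set_scope.
Local Open Scope ring_scope.

(* Order the indices met by [U_{d,r}] as sites [r < d-r < d < d+r < ...] with
   occupation events [E]. Then [U] says that an occupied site forces the next two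
   sites (three after a multiple of [d]) to be empty, and [V] imposes this only from
   the fourth site on. Splitting on the first occupied site, the probabilities
   [a_n] of the constraints from site [3n] on satisfy a three-term recurrence
   [a_n = A_n a_(n+1) + B_n a_(n+2)]. With [x = q^r], [w = q^(d-r)], [Q = q^d], the
   q-series [psi n = sum_k Q^(k(k+n)) (Q^n;Q)_k / ((Q;Q)_k (-xQ^n;Q)_k (-wQ^n;Q)_k)]
   gives a bounded solution of the same recurrence, and as [B_n = O(Q^n)] the
   Casorati determinant [a_0 z_1 - a_1 z_0] of the two solutions vanishes. Hence
   [P(V) = P(U) psi(1) (1 + Q)], while [psi(1) / ((1+x)(1+w)) = g_3(-x;Q)] and
   [F_r F_(d-r) F_d U] is the empty first block times [V]. *)

Lemma prod1D_le_expR (R : realType) k (t : nat -> R) :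
  (forall j, 0 <= t j) -> \prod_(j < k) (1 + t j) <= expR (\sum_(j < k) t j).
Proof.
move=> t0; rewrite expR_sum; apply: ler_prod => j _.
by rewrite expR_ge1Dx andbT addr_ge0.
Qed.

Lemma series0 (R : zmodType) (u : nat -> R) : series u 0 = 0.
Proof. by rewrite /series /= big_geq. Qed.

Section QPochhammer.
Variables (R : nzRingType) (a q : R).

Lemma qpoch0 : qpoch a q 0 = 1.
Proof. by rewrite /qpoch big_ord0. Qed.

Lemma qpochSr k : qpoch a q k.+1 = qpoch a q k * (1 - a * q ^+ k).
Proof. by rewrite /qpoch big_ord_recr. Qed.

Lemma qpochSl k : qpoch a q k.+1 = (1 - a) * qpoch (a * q) q k.
Proof.
rewrite /qpoch big_ord_recl expr0 mulr1; congr (_ * _).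
by apply: eq_bigr => i _; rewrite lift0 exprS mulrA.
Qed.

Lemma qpoch1 : qpoch a q 1 = 1 - a.
Proof. by rewrite qpochSr qpoch0 mul1r expr0 mulr1. Qed.

End QPochhammer.

Definition qpoch_inv_bound {R : realType} (t : R) := expR (t / (1 - t) ^+ 2).

Section QPochhammerBounds.
Context {R : realType} {t : R}.
Hypothesis t01 : 0 < t < 1.

Let t_gt0 : 0 < t. Proof. by case/andP: t01. Qed.
Let t_lt1 : t < 1. Proof. by case/andP: t01. Qed.

Lemma exprt_ge0 n : 0 <= t ^+ n.
Proof. by rewrite exprn_ge0 ?ltW. Qed.

Lemma exprt_le1 n : t ^+ n <= 1.
Proof. by rewrite exprn_ile1 ?ltW. Qed.

Lemma exprSt_lt1 n : t ^+ n.+1 < 1.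
Proof. by rewrite exprn_ilt1 ?ltW. Qed.

Lemma exprt_le m n : (n <= m)%N -> t ^+ m <= t ^+ n.
Proof. by move=> nm; rewrite ler_wiXn2l ?ltW. Qed.

Lemma qpoch_tt_gt0 k : 0 < qpoch t t k.
Proof.
by apply: prodr_gt0 => i _; rewrite subr_gt0 -exprS exprSt_lt1.
Qed.

Lemma qpoch_pow_ge0 n k : 0 <= qpoch (t ^+ n) t k.
Proof. by apply: prodr_ge0 => i _; rewrite subr_ge0 -exprD exprt_le1. Qed.

Lemma qpoch_pow_le1 n k : qpoch (t ^+ n) t k <= 1.
Proof.
apply: prodr_ile1 => i _; rewrite -exprD.
have := exprt_le1 (n + i); have := exprt_ge0 (n + i).
by move=> h1 h2; apply/andP; split; lra.
Qed.

Lemma geom_sum_le k c : 0 <= c -> \sum_(j < k) c * t ^+ j <= c / (1 - t).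
Proof.
move=> c0; have := @geometric_le_lim R k c t c0 t_gt0.
by rewrite gtr0_norm // => /(_ t_lt1); rewrite /series /= big_mkord.
Qed.

Lemma qpoch_inv_bound_gt0 : 0 < qpoch_inv_bound t.
Proof. exact: expR_gt0. Qed.

(* [1 / (1 - t^(j+1)) <= 1 + t/(1-t) * t^j], and then [1 + s <= exp s]. *)
Lemma invqpoch_tt_le k : (qpoch t t k)^-1 <= qpoch_inv_bound t.
Proof.
have t1 : 0 < 1 - t by rewrite subr_gt0.
rewrite /qpoch -prodfV.
apply: (@le_trans _ _ (\prod_(j < k) (1 + t / (1 - t) * t ^+ j))).
  apply: ler_prod => j _.
  have hj : t * t ^+ j < 1 by rewrite -exprS exprSt_lt1.
  have hj' : t * t ^+ j <= t.
    by rewrite -[leRHS]mulr1 ler_pM2l ?exprt_le1.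
  rewrite invr_ge0 subr_ge0 ltW //=.
  have -> : (1 - t * t ^+ j)^-1 = 1 + t * t ^+ j / (1 - t * t ^+ j).
    by field; rewrite subr_eq0 eq_sym lt_eqF.
  rewrite lerD2l [t / _ * _]mulrAC; apply: ler_wpM2l.
    by rewrite mulr_ge0 ?exprt_ge0 ?ltW.
  by rewrite lef_pV2 ?posrE ?subr_gt0 // lerB.
apply: (le_trans (@prod1D_le_expR R k (fun j => t / (1 - t) * t ^+ j) _)) => [j|].
  by rewrite mulr_ge0 ?exprt_ge0 // divr_ge0 ?ltW.
rewrite /qpoch_inv_bound ler_expR.
have c0 : 0 <= t / (1 - t) by rewrite divr_ge0 ?ltW.
apply: (le_trans (geom_sum_le k _ c0)).
by rewrite expr2 invfM mulrA.
Qed.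

Lemma qratio_ge0 m e k : 0 <= t ^+ e * qpoch (t ^+ m) t k / qpoch t t k.
Proof.
by rewrite divr_ge0 ?mulr_ge0 ?exprt_ge0 ?qpoch_pow_ge0 // ltW // qpoch_tt_gt0.
Qed.

Lemma qratio_le m e k : (k <= e)%N ->
  t ^+ e * qpoch (t ^+ m) t k / qpoch t t k <= qpoch_inv_bound t * t ^+ k.
Proof.
move=> ke; rewrite -mulrA [qpoch_inv_bound t * _]mulrC.
apply: ler_pM; rewrite ?exprt_ge0 ?exprt_le //.
  by rewrite mulr_ge0 ?qpoch_pow_ge0 // invr_ge0 ltW // qpoch_tt_gt0.
rewrite -[qpoch_inv_bound t]mul1r ler_pM ?qpoch_pow_ge0 ?qpoch_pow_le1 //.
  by rewrite invr_ge0 ltW // qpoch_tt_gt0.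
exact: invqpoch_tt_le.
Qed.

End QPochhammerBounds.

Section ContinuedFraction.
Context {R : realType}.
Variables (x w : R).
Hypotheses (x_gt0 : 0 < x) (w_gt0 : 0 < w) (xw_lt1 : x * w < 1).

Local Notation Q := (x * w).

Local Notation C := (qpoch_inv_bound (x * w)).
Local Notation K := (C / (1 - x * w)).

Let Q_gt0 : 0 < Q. Proof. exact: mulr_gt0. Qed.
Let Q01 : 0 < Q < 1. Proof. by rewrite Q_gt0. Qed.
Let expQ_ge0 := exprt_ge0 Q01.
Let expQ_le1 := exprt_le1 Q01.
Let expSQ_lt1 := exprSt_lt1 Q01.
Let qpoch_QQ_gt0 := qpoch_tt_gt0 Q01.
Let C_gt0 : 0 < C. Proof. exact: qpoch_inv_bound_gt0. Qed.
Let K_ge0 : 0 <= K. Proof. by rewrite divr_ge0 ?(ltW C_gt0) // subr_ge0 ltW. Qed.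

Definition dfac n := (1 + x * Q ^+ n) * (1 + w * Q ^+ n).
(* [dprod n k = (-xQ^n;Q)_k (-wQ^n;Q)_k]. *)
Definition dprod n k := \prod_(j < k) dfac (n + j).

Definition psi_num n k := Q ^+ (k * (k + n)) * qpoch (Q ^+ n) Q k / qpoch Q Q k.
Definition psi_term n k := psi_num n k / dprod n k.
Definition psi n := limn (series (psi_term n)).

Definition psi_tel n k := Q ^+ (k * (k + n)) * qpoch (Q ^+ n.+1) Q k / qpoch Q Q k.
Definition psi_rec_a n := (1 + (x + w) * Q ^+ n) / dfac n.
Definition psi_rec_b n := Q ^+ n.+1 * (1 - Q ^+ n.+1) / (dfac n * dfac n.+1).

Lemma dfac_ge1 n : 1 <= dfac n.
Proof. by apply: mulr_ege1; rewrite lerDl mulr_ge0 ?expQ_ge0 ?ltW. Qed.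

Lemma dfac_neq0 n : dfac n != 0.
Proof. by rewrite gt_eqF // (lt_le_trans ltr01 (dfac_ge1 n)). Qed.

Lemma dprod_ge1 n k : 1 <= dprod n k.
Proof.
elim: k => [|k IH]; first by rewrite /dprod big_ord0.
by rewrite /dprod big_ord_recr /= mulr_ege1 // dfac_ge1.
Qed.

Lemma dprod_gt0 n k : 0 < dprod n k.
Proof. exact: lt_le_trans ltr01 (dprod_ge1 n k). Qed.

Lemma dprod_neq0 n k : dprod n k != 0.
Proof. by rewrite gt_eqF // dprod_gt0. Qed.

Lemma dprod0 n : dprod n 0 = 1.
Proof. by rewrite /dprod big_ord0. Qed.

Lemma dprodSl n k : dprod n k.+1 = dfac n * dprod n.+1 k.
Proof.
rewrite /dprod big_ord_recl addn0; congr (_ * _).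
by apply: eq_bigr => i _; rewrite lift0 addnS addSn.
Qed.

Lemma dprodSr n k : dprod n k.+1 = dprod n k * dfac (n + k).
Proof. by rewrite /dprod big_ord_recr. Qed.

Lemma psi_num1 n : psi_num n 1 =
  psi_num n.+1 0 * (1 + (x + w) * Q ^+ n) + psi_tel n 1 - psi_tel n 0 * dfac n.
Proof.
rewrite /psi_num /psi_tel /dfac !qpoch1 !qpoch0 mul1n mul0n add1n.
rewrite !expr0 !mulr1 !divr1 mul1r exprS.
have h : 1 - Q * Q ^+ 0 != 0 by rewrite expr0 mulr1 subr_eq0 eq_sym lt_eqF.
by rewrite expr0 mulr1 in h; field.
Qed.

Lemma psi_numSS n k : psi_num n k.+2 =
  psi_num n.+1 k.+1 * (1 + (x + w) * Q ^+ n)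
  + Q ^+ n.+1 * (1 - Q ^+ n.+1) * psi_num n.+2 k
  + psi_tel n k.+2 - psi_tel n k.+1 * dfac (n + k.+1).
Proof.
have e1 : qpoch (Q ^+ n) Q k.+2 =
    (1 - Q ^+ n) * (1 - Q ^+ n.+1) * qpoch (Q ^+ n.+2) Q k.
  by rewrite !qpochSl -!exprSr mulrA.
have e2 : qpoch (Q ^+ n.+1) Q k.+2 =
    (1 - Q ^+ n.+1) * (qpoch (Q ^+ n.+2) Q k * (1 - Q ^+ n.+2 * Q ^+ k)).
  by rewrite qpochSl qpochSr -exprSr.
have e3 : qpoch (Q ^+ n.+1) Q k.+1 = (1 - Q ^+ n.+1) * qpoch (Q ^+ n.+2) Q k.
  by rewrite qpochSl -exprSr.
have e4 : qpoch Q Q k.+2 = qpoch Q Q k * (1 - Q * Q ^+ k) * (1 - Q * Q ^+ k.+1).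
  by rewrite !qpochSr.
have e5 : qpoch Q Q k.+1 = qpoch Q Q k * (1 - Q * Q ^+ k) by rewrite qpochSr.
have p1 : Q ^+ (k.+2 * (k.+2 + n)) =
    Q ^+ (k * (k + n.+2)) * (Q ^+ k) ^+ 2 * (Q ^+ n) ^+ 2 * Q ^+ 4.
  by rewrite -!exprM -!exprD; congr (_ ^+ _); ring.
have p2 : Q ^+ (k.+1 * (k.+1 + n.+1)) =
    Q ^+ (k * (k + n.+2)) * Q ^+ k * Q ^+ n * Q ^+ 2.
  by rewrite -!exprD; congr (_ ^+ _); ring.
have p3 : Q ^+ (k.+1 * (k.+1 + n)) = Q ^+ (k * (k + n.+2)) * Q ^+ n * Q.
  by rewrite -!exprD -[X in _ = _ * X]expr1 -exprD; congr (_ ^+ _); ring.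
have p4 : Q ^+ (n + k.+1) = Q ^+ n * Q ^+ k * Q by rewrite exprD exprSr mulrA.
rewrite /psi_num /psi_tel /dfac e1 e2 e3 e4 e5 p1 p2 p3 p4.
have hA : 1 - Q * Q ^+ k != 0 by rewrite subr_eq0 eq_sym lt_eqF // -exprS.
have hA2 : 1 - Q * (Q * Q ^+ k) != 0.
  by rewrite subr_eq0 eq_sym lt_eqF // -!exprS.
have rr0 : qpoch Q Q k != 0 by rewrite gt_eqF.
move: (qpoch (Q ^+ n.+2) Q k) (qpoch Q Q k) rr0 (Q ^+ (k * (k + n.+2))) => p rr rr0 b.
rewrite !exprS !expr0 in hA hA2 *.
move: (Q ^+ k) (Q ^+ n) hA hA2 => A B hA hA2.
by field; rewrite ?rr0 ?hA ?hA2.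
Qed.

(* The one-step identity behind the recurrence for [psi]; [psi_tel] telescopes. *)
Lemma psi_numS n k : psi_num n k.+1 =
  psi_num n.+1 k * (1 + (x + w) * Q ^+ n)
  + (if k is k'.+1 then Q ^+ n.+1 * (1 - Q ^+ n.+1) * psi_num n.+2 k' else 0)
  + psi_tel n k.+1 - psi_tel n k * dfac (n + k).
Proof.
by case: k => [|k]; [rewrite addr0 addn0; exact: psi_num1 | exact: psi_numSS].
Qed.

Lemma psi_term_ge0 n k : 0 <= psi_term n k.
Proof. by rewrite divr_ge0 ?qratio_ge0 // ltW // dprod_gt0. Qed.

Lemma psi_term_le n k : psi_term n k <= C * Q ^+ k.
Proof.
rewrite ler_pdivrMr ?dprod_gt0 //.
have ke : (k <= k * (k + n))%N by nia.
apply: (le_trans (qratio_le Q01 n _ _ ke)).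
by rewrite -[leLHS]mulr1 ler_wpM2l ?dprod_ge1 ?mulr_ge0 ?expQ_ge0 ?ltW.
Qed.

Lemma psi_tel_ge0 n k : 0 <= psi_tel n k.
Proof. exact: (qratio_ge0 Q01). Qed.

Lemma psi_tel_le n k : psi_tel n k <= C * Q ^+ k.
Proof.
have ke : (k <= k * (k + n))%N by nia.
exact: (qratio_le Q01 n.+1 _ _ ke).
Qed.

Lemma series_psi_term_le n m : series (psi_term n) m <= K.
Proof.
rewrite /series /= big_mkord.
apply: le_trans (geom_sum_le Q01 m _ (ltW C_gt0)).
by apply: ler_sum => k _; exact: psi_term_le.
Qed.

Lemma series_psi_term_nd n : nondecreasing_seq (series (psi_term n)).
Proof.
by move=> a b ab; apply: (nondecreasing_series (fun k _ _ => psi_term_ge0 n k)).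
Qed.

Lemma cvg_series_psi_term n : series (psi_term n) @ \oo --> psi n.
Proof.
apply: nondecreasing_is_cvgn; first exact: series_psi_term_nd.
by exists (K) => _ [m _ <-]; exact: series_psi_term_le.
Qed.

Lemma psi_le n : psi n <= K.
Proof.
apply: limr_le; first exact: cvg_series_psi_term.
by apply: nearW => m; exact: series_psi_term_le.
Qed.

Lemma psi_term0 n : psi_term n 0 = 1.
Proof. by rewrite /psi_term /psi_num dprod0 !qpoch0 mul0n expr0 !divr1 mulr1. Qed.

Lemma psi_ge1 n : 1 <= psi n.
Proof.
have := nondecreasing_cvgn_le (series_psi_term_nd n) (cvgP _ (cvg_series_psi_term n)) 1.
by rewrite /series /= big_nat1 psi_term0.
Qed.

Lemma psi_term_rec n k : psi_term n k.+1 =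
  psi_rec_a n * psi_term n.+1 k
  + psi_rec_b n * (if k is k'.+1 then psi_term n.+2 k' else 0)
  + psi_tel n k.+1 / dprod n k.+1 - psi_tel n k / dprod n k.
Proof.
rewrite /psi_term psi_numS /psi_rec_a /psi_rec_b.
have d0 := dfac_neq0 n; have d1 := dfac_neq0 n.+1.
case: k => [|k].
  by rewrite dprodSl !dprod0 addn0 !mulr0 addr0 mulr1; field.
have h : dprod n.+2 k = dprod n.+1 k * dfac (n.+1 + k) / dfac n.+1.
  by rewrite -dprodSr dprodSl mulrC mulrA mulVf ?mul1r.
have pb := dprod_neq0 n.+1 k.
rewrite h (dprodSr n k.+1) (dprodSl n k) (dprodSr n.+1 k) addnS addSn.
by field; rewrite d0 d1 pb dfac_neq0.
Qed.

Lemma series_psi_termS n K : series (psi_term n) K.+1 =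
  psi_rec_a n * series (psi_term n.+1) K
  + psi_rec_b n * series (psi_term n.+2) K.-1 + psi_tel n K / dprod n K.
Proof.
elim: K => [|K IH].
  rewrite seriesSr !series0 psi_term0 /psi_tel !qpoch0 mul0n expr0 dprod0.
  by rewrite !mulr0 !add0r !divr1 mulr1.
rewrite seriesSr IH seriesSr psi_term_rec /=.
case: K {IH} => [|K] /=; first by rewrite series0; ring.
by rewrite [series (psi_term n.+2) K.+1]seriesSr; ring.
Qed.

Lemma psi_rec n : psi n = psi_rec_a n * psi n.+1 + psi_rec_b n * psi n.+2.
Proof.
have lhs : (fun K => series (psi_term n) K.+1) @ \oo --> psi n.
  by rewrite cvg_shiftS; exact: cvg_series_psi_term.
have tel : (fun K => psi_tel n K / dprod n K) @ \oo --> 0.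
  apply: (@squeeze_cvgr _ _ _ _ (fun _ => 0) (fun k => C * Q ^+ k)).
  - apply: nearW => k; rewrite divr_ge0 ?psi_tel_ge0 ?(ltW (dprod_gt0 _ _)) //=.
    rewrite ler_pdivrMr ?dprod_gt0 //; apply: (le_trans (psi_tel_le n k)).
    by rewrite -[leLHS]mulr1 ler_wpM2l ?dprod_ge1 ?mulr_ge0 ?expQ_ge0 ?ltW.
  - exact: cvg_cst.
  - by have := @cvg_geometric R C Q; rewrite gtr0_norm // => /(_ xw_lt1).
have rhs : (fun K => series (psi_term n) K.+1) @ \oo -->
    psi_rec_a n * psi n.+1 + psi_rec_b n * psi n.+2 + 0.
  rewrite (funext (series_psi_termS n)).
  apply: cvgD => //; apply: cvgD; apply: cvgM; try exact: cvg_cst.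
    exact: cvg_series_psi_term.
  suff -> : (fun K => series (psi_term n.+2) K.-1) =
            (fun K => series (psi_term n.+2) (K - 1)%N).
    by rewrite (cvg_centern 1 (series (psi_term n.+2))); exact: cvg_series_psi_term.
  by apply: funext => K; rewrite subn1.
by rewrite addr0 in rhs; exact: cvg_unique lhs rhs.
Qed.

Lemma psi0 : psi 0 = 1.
Proof.
have h : (fun K => series (psi_term 0) K.+1) @ \oo --> psi 0.
  by rewrite cvg_shiftS; exact: cvg_series_psi_term.
have E : (fun K => series (psi_term 0) K.+1) = (fun _ => 1).
  apply: funext; elim => [|K IH]; first by rewrite seriesSr series0 add0r psi_term0.
  by rewrite seriesSr IH /psi_term /psi_num expr0 qpochSl subrr !(mul0r, mulr0) addr0.
by rewrite E in h; exact: cvg_unique h (cvg_cst _).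
Qed.

Lemma g3_term_psi k : g3_term (- x) Q k = psi_term 1 k / dfac 0.
Proof.
have x0 : x != 0 by rewrite gt_eqF.
rewrite /g3_term /psi_term /psi_num expr1 addn1 mulfK; last by rewrite gt_eqF.
have -> : qpoch (- x) Q k.+1 * qpoch ((- x)^-1 * Q) Q k.+1 = dprod 0 k.+1.
  rewrite /qpoch /dprod -big_split /=; apply: eq_bigr => i _; rewrite add0n /dfac.
  congr (_ * _); first by rewrite mulNr opprK.
  by rewrite invrN !mulNr opprK mulrA mulVf ?mul1r.
by rewrite dprodSl; field; rewrite dprod_neq0 dfac_neq0.
Qed.

Lemma cvg_series_g3_term : series (g3_term (- x) Q) @ \oo --> psi 1 / dfac 0.
Proof.
have -> : series (g3_term (- x) Q) = (fun K => series (psi_term 1) K * (dfac 0)^-1).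
  apply: funext => K; rewrite /series /= big_distrl /=.
  by apply: eq_bigr => k _; rewrite g3_term_psi.
by apply: cvgM; [exact: cvg_series_psi_term | exact: cvg_cst].
Qed.

(* A second solution of the recurrence obeyed by the probabilities of [excl_on]. *)
Definition zfac n := \prod_(j < n) (1 + Q ^+ j.+1).
Definition zsol n := psi n * zfac n.
Definition rec_a n := (1 + (x + w) * Q ^+ n) / (dfac n * (1 + Q ^+ n.+1)).
Definition rec_b n := Q ^+ n.+1 * (1 - Q ^+ n.+1) /
  (dfac n * dfac n.+1 * (1 + Q ^+ n.+1) * (1 + Q ^+ n.+2)).

Lemma zfac_ge1 n : 1 <= zfac n.
Proof.
elim: n => [|n IH]; first by rewrite /zfac big_ord0.
by rewrite /zfac big_ord_recr /= mulr_ege1 // lerDl expQ_ge0.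
Qed.

Lemma zfac_gt0 n : 0 < zfac n.
Proof. exact: lt_le_trans ltr01 (zfac_ge1 n). Qed.

Lemma zfacS n : zfac n.+1 = zfac n * (1 + Q ^+ n.+1).
Proof. by rewrite /zfac big_ord_recr. Qed.

Lemma zsol_rec n : zsol n = rec_a n * zsol n.+1 + rec_b n * zsol n.+2.
Proof.
rewrite /zsol psi_rec /rec_a /rec_b /psi_rec_a /psi_rec_b !zfacS.
have h1 : 1 + Q ^+ n.+1 != 0 by rewrite gt_eqF // ltr_wpDr ?expQ_ge0.
have h2 : 1 + Q ^+ n.+2 != 0 by rewrite gt_eqF // ltr_wpDr ?expQ_ge0.
by field; rewrite h1 h2 !dfac_neq0.
Qed.

Lemma zsol_ge0 n : 0 <= zsol n.
Proof. by rewrite mulr_ge0 ?(le_trans ler01 (psi_ge1 n)) // ltW // zfac_gt0. Qed.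

Lemma zsol_le n : zsol n <= K * zfac n.
Proof. by rewrite ler_wpM2r ?psi_le // ltW // zfac_gt0. Qed.

Lemma rec_b_ge0 n : 0 <= rec_b n.
Proof.
apply: divr_ge0; first by rewrite mulr_ge0 ?expQ_ge0 // subr_ge0.
have := dfac_ge1 n; have := dfac_ge1 n.+1.
have := expQ_ge0 n.+1; have := expQ_ge0 n.+2.
move: (dfac n) (dfac n.+1) (Q ^+ n.+1) (Q ^+ n.+2) => a b c e he hc hb ha.
by rewrite !mulr_ge0 ?addr_ge0 // (le_trans ler01).
Qed.

Lemma rec_b_zfac_le n : rec_b n * (1 + Q ^+ n.+2) <= Q ^+ n.+1.
Proof.
have d0 := dfac_ge1 n; have d1 := dfac_ge1 n.+1.
have q1 := expQ_ge0 n.+1; have q2 := expQ_ge0 n.+2.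
have -> : rec_b n * (1 + Q ^+ n.+2) =
    Q ^+ n.+1 * ((1 - Q ^+ n.+1) / (dfac n * dfac n.+1 * (1 + Q ^+ n.+1))).
  by rewrite /rec_b; field; rewrite !dfac_neq0 !gt_eqF // ltr_wpDr.
have dp : 1 <= dfac n * dfac n.+1 * (1 + Q ^+ n.+1).
  by apply: mulr_ege1; [exact: mulr_ege1 | rewrite lerDl].
rewrite -[leRHS]mulr1 ler_wpM2l // ler_pdivrMr ?mul1r; last first.
  exact: lt_le_trans ltr01 dp.
by apply: le_trans dp; rewrite gerBl.
Qed.

Lemma prod_rec_b_zfac_le L : \prod_(m < L) rec_b m * zfac L.+1 <= (1 + Q) * Q ^+ L.
Proof.
elim: L => [|L IH]; first by rewrite big_ord0 mul1r expr0 mulr1 /zfac big_ord1.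
rewrite big_ord_recr /= zfacS.
have -> : (1 + Q) * Q ^+ L.+1 = (1 + Q) * Q ^+ L * Q by rewrite exprSr mulrA.
have -> : \prod_(i < L) rec_b i * rec_b L * (zfac L.+1 * (1 + Q ^+ L.+2))
   = (\prod_(i < L) rec_b i * zfac L.+1) * (rec_b L * (1 + Q ^+ L.+2)) by ring.
apply: ler_pM => //.
- by rewrite mulr_ge0 ?(ltW (zfac_gt0 _)) //; apply: prodr_ge0 => i _; exact: rec_b_ge0.
- by rewrite mulr_ge0 ?rec_b_ge0 ?addr_ge0 ?expQ_ge0.
apply: le_trans (rec_b_zfac_le L) _.
by rewrite -[leRHS]expr1 exprt_le.
Qed.

Section Casorati.
Variables (a : nat -> R) (L : nat).
Hypothesis a01 : forall n, 0 <= a n <= 1.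
Hypothesis a_rec : forall n, (n < L)%N -> a n = rec_a n * a n.+1 + rec_b n * a n.+2.

Local Notation cas n := (a n * zsol n.+1 - a n.+1 * zsol n).

Lemma casorati_prod m : (m <= L)%N -> `|cas 0| = \prod_(i < m) rec_b i * `|cas m|.
Proof.
elim: m => [|m IH] mL; first by rewrite big_ord0 mul1r.
rewrite IH ?(ltnW mL) // big_ord_recr /=.
have -> : cas m = - (rec_b m * cas m.+1) by rewrite (a_rec m mL) (zsol_rec m); ring.
by rewrite normrN normrM ger0_norm ?rec_b_ge0 // mulrA.
Qed.

Lemma casorati_le : `|cas L| <= 2 * (K) * zfac L.+1.
Proof.
apply: (le_trans (ler_normB _ _)).
have [h0 h1] := andP (a01 L); have [h2 h3] := andP (a01 L.+1).
have e1 : `|a L * zsol L.+1| <= K * zfac L.+1.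
  by rewrite normrM !ger0_norm ?zsol_ge0 // -[leRHS]mul1r ler_pM ?zsol_ge0 ?zsol_le.
have e2 : `|a L.+1 * zsol L| <= K * zfac L.+1.
  rewrite normrM !ger0_norm ?zsol_ge0 // -[leRHS]mul1r ler_pM ?zsol_ge0 //.
  apply: (le_trans (zsol_le L)); rewrite ler_wpM2l //.
  by rewrite zfacS ler_peMr ?(ltW (zfac_gt0 _)) // lerDl expQ_ge0.
have -> : 2 * K * zfac L.+1 = K * zfac L.+1 + K * zfac L.+1 by ring.
exact: lerD.
Qed.

Lemma casorati_bound :
  `|a 0 * zsol 1 - a 1 * zsol 0| <= 2 * K * ((1 + Q) * Q ^+ L).
Proof.
rewrite (casorati_prod L (leqnn L)).
have Bp : 0 <= \prod_(i < L) rec_b i by apply: prodr_ge0 => i _; exact: rec_b_ge0.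
apply: (le_trans (ler_wpM2l Bp casorati_le)).
rewrite mulrCA; apply: ler_wpM2l; last exact: prod_rec_b_zfac_le.
by rewrite mulr_ge0.
Qed.

End Casorati.

End ContinuedFraction.

Section Probability.
Context {R : realType} {dsp : measure_display} {T : measurableType dsp}.
Variable P : probability T R.

Lemma pr_fin_num A : measurable A -> P A \is a fin_num.
Proof. exact: fin_num_measure. Qed.

Lemma pr_ge0 A : 0 <= pr P A.
Proof. by rewrite /pr fine_ge0. Qed.

Lemma pr_le1 A : measurable A -> pr P A <= 1.
Proof. by move=> mA; rewrite /pr -lee_fin fineK ?pr_fin_num ?probability_le1. Qed.

Lemma pr_setT : pr P setT = 1.
Proof. by rewrite /pr probability_setT. Qed.

Lemma pr_disjointU A B : measurable A -> measurable B -> A `&` B = set0 ->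
  pr P (A `|` B) = pr P A + pr P B.
Proof. by move=> mA mB AB; rewrite /pr measureU // fineD // pr_fin_num. Qed.

Lemma prDI A B : measurable A -> measurable B ->
  pr P A = pr P (A `\` B) + pr P (A `&` B).
Proof.
move=> mA mB; rewrite /pr (measureDI P mA mB) fineD // pr_fin_num //.
  exact: measurableD.
exact: measurableI.
Qed.

Lemma cvg_pr_bigcap (F : nat -> set T) : (forall i, measurable (F i)) ->
  (forall n m, (n <= m)%N -> F m `<=` F n) ->
  (fun i => pr P (F i)) @ \oo --> pr P (\bigcap_i F i).
Proof.
move=> mF dF; have mC : measurable (\bigcap_i F i) by exact: bigcapT_measurable.
have h : (P \o F) x @[x --> \oo] --> P (\bigcap_i F i).
  apply: nonincreasing_cvg_mu => //.
  - by rewrite -ge0_fin_numE ?measure_ge0 ?pr_fin_num.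
  - by move=> n m nm; apply/subsetPset; exact: dF.
by rewrite -(fineK (pr_fin_num _ mC)) in h; exact: fine_cvg h.
Qed.

End Probability.

Section Cylinders.
Context {R : realType} {dsp : measure_display} {T : measurableType dsp}.
Variables (P : probability T R) (E : nat -> set T).
Hypothesis mE : forall j, (0 < j)%N -> measurable (E j).
Hypothesis E_indep : indep_events_pos P E.

(* A literal [(i, b)] asks that [E i] occurs ([b = true]) or not ([b = false]). *)
Definition lit (ib : nat * bool) : set T := if ib.2 then E ib.1 else ~` E ib.1.
Definition lit_pr (ib : nat * bool) : R :=
  if ib.2 then pr P (E ib.1) else 1 - pr P (E ib.1).
Definition cyl (l : seq (nat * bool)) : set T := foldr (fun ib A => lit ib `&` A) setT l.
Definition cyl_pr (l : seq (nat * bool)) : R := \prod_(ib <- l) lit_pr ib.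

Lemma cyl_cons a l : cyl (a :: l) = lit a `&` cyl l.
Proof. by []. Qed.

Lemma cyl_cat l1 l2 : cyl (l1 ++ l2) = cyl l1 `&` cyl l2.
Proof. by elim: l1 => [|a l1 IH] /=; rewrite ?setTI // IH setIA. Qed.

Lemma cyl_pr_cons a l : cyl_pr (a :: l) = lit_pr a * cyl_pr l.
Proof. by rewrite /cyl_pr big_cons. Qed.

Lemma cyl_pr_cat l1 l2 : cyl_pr (l1 ++ l2) = cyl_pr l1 * cyl_pr l2.
Proof. by rewrite /cyl_pr big_cat. Qed.

Lemma cyl_measurable l : all (fun ib => 0 < ib.1)%N l -> measurable (cyl l).
Proof.
elim: l => [|[i b] l IH] /=; first by move=> _; exact: measurableT.
case/andP=> i0 /IH ml; apply: measurableI => //.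
by rewrite /lit; case: b => /=; [exact: mE | exact/measurableC/mE].
Qed.

Lemma lit_pr_ge0 ib : (0 < ib.1)%N -> 0 <= lit_pr ib.
Proof.
move=> i0; rewrite /lit_pr; case: ib.2; first exact: pr_ge0.
by rewrite subr_ge0 pr_le1 //; exact: mE.
Qed.

Lemma cyl_pr_ge0 l : all (fun ib => 0 < ib.1)%N l -> 0 <= cyl_pr l.
Proof.
move=> hl; rewrite /cyl_pr big_seq; apply: prodr_ge0 => ib /(allP hl).
exact: lit_pr_ge0.
Qed.

Lemma bigcap_cyl s : \bigcap_(i in [set` s]) E i = cyl [seq (i, true) | i <- s].
Proof.
elim: s => [|i s IH]; first by rewrite set_nil bigcap_set0.
rewrite map_cons cyl_cons -IH -[lit (i, true)]/(E i) -bigcap_setU1.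
congr bigcap; apply/seteqP; split => j /=; rewrite inE.
  by case/orP => [/eqP ->|]; [left|right].
by case=> [->|->]; rewrite ?eqxx ?orbT.
Qed.

(* Negative literals are removed one at a time by [prDI], down to the product
   rule for positive ones. *)
Lemma pr_cyl_gen l s :
  uniq (s ++ map fst l) -> all (fun i => 0 < i)%N (s ++ map fst l) ->
  pr P (cyl [seq (i, true) | i <- s] `&` cyl l) = \prod_(i <- s) pr P (E i) * cyl_pr l.
Proof.
elim: l s => [|[i b] l IH] s us ps.
  rewrite cats0 in us ps.
  by rewrite [cyl [::]]/= setIT /cyl_pr big_nil mulr1 -bigcap_cyl; exact: E_indep.
have perm := permEl (perm_catCA s [:: i] (map fst l)).
have us' : uniq (i :: s ++ map fst l) by rewrite -(perm_uniq perm).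
have ps' : all (fun i => 0 < i)%N (i :: s ++ map fst l) by rewrite -(perm_all _ perm).
have /andP[_ us0] : (i \notin s ++ map fst l) && uniq (s ++ map fst l) := us'.
have /andP[i0 ps0] : (0 < i)%N && all (fun i => 0 < i)%N (s ++ map fst l) := ps'.
have cyl_true : cyl [seq (j, true) | j <- s] `&` (E i `&` cyl l) =
    cyl [seq (j, true) | j <- i :: s] `&` cyl l.
  by rewrite map_cons cyl_cons setIA [_ `&` E i]setIC -setIA.
rewrite cyl_cons cyl_pr_cons /lit_pr /lit; case: b {us ps} => /=.
  by rewrite cyl_true IH // big_cons; ring.
set A := cyl [seq (j, true) | j <- s] `&` cyl l.
have mA : measurable A.
  rewrite /A -cyl_cat; apply: cyl_measurable; rewrite all_cat all_map.
  by move: ps0; rewrite all_cat all_map => /andP[h1 h2]; apply/andP; split.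
have eAE : A `&` E i = cyl [seq (j, true) | j <- i :: s] `&` cyl l.
  by rewrite /A -setIA [cyl l `&` _]setIC cyl_true.
have -> : cyl [seq (j, true) | j <- s] `&` (~` E i `&` cyl l) = A `\` E i.
  by rewrite /A setDE -setIA [cyl l `&` _]setIC.
have -> : pr P (A `\` E i) = pr P A - pr P (A `&` E i).
  by rewrite (prDI P A (E i) mA (mE i i0)) addrK.
rewrite eAE IH // /A IH // big_cons; ring.
Qed.

Lemma pr_cyl l : uniq (map fst l) -> all (fun i => 0 < i)%N (map fst l) ->
  pr P (cyl l) = cyl_pr l.
Proof.
by move=> u p; have := @pr_cyl_gen l [::] u p; rewrite /= setTI big_nil mul1r.
Qed.

End Cylinders.

(* The indices [r < d - r < d < d + r < 2d - r < 2d < ...] constrained by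
   [U_{d,r}], in increasing order. *)
Definition site (d r k : nat) : nat :=
  (if k %% 3 == 0 then k %/ 3 * d + r
   else if k %% 3 == 1 then k %/ 3 * d + (d - r)
   else (k %/ 3).+1 * d)%N.

(* Sites [3n+2], i.e. the multiples of [d], exclude three following sites. *)
Definition block_end (k : nat) : bool := (k %% 3 == 2)%N.

Section Sites.
Context {d r : nat}.
Hypotheses (r_gt0 : (0 < r)%N) (rd : (2 * r < d)%N).
Local Notation site := (site d r).

Lemma site_3n n : site (n * 3) = (n * d + r)%N.
Proof. by rewrite /site modnMl mulnK. Qed.

Lemma site_3n1 n : site (n * 3).+1 = (n * d + (d - r))%N.
Proof. by rewrite /site -[(n * 3).+1]addn1 modnMDl divnMDl //= addn0. Qed.

Lemma site_3n2 n : site (n * 3).+2 = (n.+1 * d)%N.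
Proof. by rewrite /site -[(n * 3).+2]addn2 modnMDl divnMDl //= addn0. Qed.

Lemma mul3S n : (n * 3).+3 = (n.+1 * 3)%N.
Proof. by rewrite mulSn addnC addn3. Qed.

Lemma mod3_cases k : exists n, [\/ k = n * 3, k = (n * 3).+1 | k = (n * 3).+2]%N.
Proof.
elim: k => [|k [n [->|->|->]]]; first by exists 0%N; constructor.
- by exists n; constructor.
- by exists n; constructor.
- by exists n.+1; constructor; rewrite mul3S.
Qed.

Lemma site_ltS k : (site k < site k.+1)%N.
Proof.
have [n [->|->|->]] := mod3_cases k.
- by rewrite site_3n site_3n1; lia.
- by rewrite site_3n1 site_3n2 mulSn; lia.
- by rewrite mul3S site_3n2 site_3n; lia.
Qed.

Lemma site_gt0 k : (0 < site k)%N.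
Proof.
elim: k => [|k IH]; last exact: ltn_trans IH (site_ltS k).
by rewrite -(mul0n 3) site_3n.
Qed.

Lemma gtn_site k : (k < site k)%N.
Proof. by elim: k => [|k IH]; [exact: site_gt0 | exact: leq_ltn_trans IH (site_ltS k)]. Qed.

Lemma block_end_3n n : block_end (n * 3) = false.
Proof. by rewrite /block_end modnMl. Qed.

Lemma block_end_3n1 n : block_end (n * 3).+1 = false.
Proof. by rewrite /block_end -[(n * 3).+1]addn1 modnMDl. Qed.

Lemma block_end_3n2 n : block_end (n * 3).+2 = true.
Proof. by rewrite /block_end -[(n * 3).+2]addn2 modnMDl. Qed.

End Sites.

Section Exclusion.
Context {R : realType} {dsp : measure_display} {T : measurableType dsp}.
Variables (P : probability T R) (E : nat -> set T).
Hypothesis mE : forall j, (0 < j)%N -> measurable (E j).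
Hypothesis E_indep : indep_events_pos P E.
Variables (d r : nat).
Hypotheses (r_gt0 : (0 < r)%N) (rd : (2 * r < d)%N).
Local Notation site := (site d r).

Let mEs k : measurable (E (site k)).
Proof. exact: mE _ (site_gt0 r_gt0 rd k). Qed.

(* An occurrence at site [k] forbids occurrences at the next two sites, and
   at the next three when [k] is a multiple of [d]: this is [U_{d,r}]. *)
Definition excl k : set T := ~` E (site k) `|`
  (~` E (site k.+1) `&` ~` E (site k.+2) `&`
   (if block_end k then ~` E (site k.+3) else setT)).

Definition excl_on k M : set T := \bigcap_(j in [set j | (k <= j < M)%N]) excl j.

Definition occ k : seq (nat * bool) :=
  (if block_end k then [:: (site k.+3, false)] else [::])
  ++ [:: (site k.+2, false); (site k.+1, false); (site k, true)].

Definition occ_len k : nat := if block_end k then 4%N else 3%N.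

Lemma excl_measurable k : measurable (excl k).
Proof.
have mF j : measurable (~` E (site j)) by exact: measurableC.
by apply: measurableU => //; apply: measurableI; [exact: measurableI | case: block_end].
Qed.

Lemma excl_on_measurable k M : measurable (excl_on k M).
Proof. by apply: bigcap_measurableType => j _; exact: excl_measurable. Qed.

Lemma excl_on_le k M : (M <= k)%N -> excl_on k M = setT.
Proof.
move=> Mk; apply/seteqP; split => // v _ j /= /andP[kj jM].
by have := leq_ltn_trans kj (leq_trans jM Mk); rewrite ltnn.
Qed.

Lemma excl_on_monotone k M M' : (M <= M')%N -> excl_on k M' `<=` excl_on k M.
Proof.
move=> MM v hv j /= /andP[kj jM]; apply: hv; rewrite /= kj.
exact: leq_trans jM MM.
Qed.

Lemma cyl_occ_E k v : cyl E (occ k) v -> E (site k) v.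
Proof. by rewrite /occ /cyl /lit; case: block_end => /=; tauto. Qed.

Lemma excl_cyl_occ k v : excl k v -> E (site k) v -> cyl E (occ k) v.
Proof.
move=> hk h0; case: hk => [/(_ h0) //|[[h1 h2] h3]].
by rewrite /occ /cyl /lit; case: block_end h3 => /= h3; repeat split.
Qed.

Lemma cyl_occ_excl k j v :
  cyl E (occ k) v -> (k <= j < k + occ_len k)%N -> excl j v.
Proof.
move=> hc /andP[kj]; move: hc; rewrite /occ /occ_len /cyl /lit /excl.
case hb: (block_end k) => /=.
- move=> [h3 [h2 [h1 [h0 _]]]] jk.
  have [->|[->|[->|->]]] : j = k \/ j = k.+1 \/ j = k.+2 \/ j = k.+3 by lia.
  + by right; rewrite hb; repeat split.
  + by left.
  + by left.
  + by left.
- move=> [h2 [h1 [h0 _]]] jk.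
  have [->|[->|->]] : j = k \/ j = k.+1 \/ j = k.+2 by lia.
  + by right; rewrite hb; repeat split.
  + by left.
  + by left.
Qed.

Lemma excl_on_split {k M} : (k < M)%N ->
  excl_on k M = (~` E (site k) `&` excl_on k.+1 M)
                `|` (cyl E (occ k) `&` excl_on (k + occ_len k) M).
Proof.
move=> kM; apply/seteqP; split => v.
- move=> hS; have hk : excl k v by apply: hS; rewrite /= leqnn.
  have [h0|h0] := pselect (E (site k) v); [right|left]; split.
  + exact: excl_cyl_occ.
  + move=> j /= /andP[kj jM]; apply: hS; rewrite /= jM andbT.
    exact: leq_trans (leq_addr _ _) kj.
  + exact: h0.
  + by move=> j /= /andP[kj jM]; apply: hS; rewrite /= jM andbT ltnW.
- case=> [[h0 hS]|[ho hS]] j /= /andP[kj jM].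
    move: kj; rewrite leq_eqVlt => /orP[/eqP <-|kj]; first by left.
    by apply: hS; rewrite /= kj.
  have [jk|jk] := ltnP j (k + occ_len k).
    by apply: cyl_occ_excl ho _; rewrite kj.
  by apply: hS; rewrite /= jk.
Qed.

Lemma cyl_pr_occ_ge0 k : 0 <= cyl_pr P E (occ k).
Proof.
apply: cyl_pr_ge0 => //; rewrite /occ.
by case: block_end; rewrite /= !(site_gt0 r_gt0 rd).
Qed.

Definition cyl_below (X : seq (nat * bool)) k :=
  uniq (map fst X) && all (fun i => (0 < i) && (i < site k))%N (map fst X).

Lemma cyl_below_cons {X k} b : cyl_below X k -> cyl_below ((site k, b) :: X) k.+1.
Proof.
case/andP=> u a; rewrite /cyl_below /= u site_gt0 // site_ltS //= andbT.
apply/andP; split.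
  by apply/negP => /(allP a) /andP[_]; rewrite ltnn.
apply/allP => i /(allP a) /andP[-> h] /=; exact: ltn_trans h (site_ltS r_gt0 rd k).
Qed.

Lemma cyl_below_occ {X k} : cyl_below X k -> cyl_below (occ k ++ X) (k + occ_len k).
Proof.
move=> h; rewrite /occ /occ_len; case: block_end => /=.
  by rewrite addn4; do 4 apply: cyl_below_cons.
by rewrite addn3; do 3 apply: cyl_below_cons.
Qed.

Lemma cyl_below_measurable {X k} : cyl_below X k -> measurable (cyl E X).
Proof.
case/andP=> _; rewrite all_map => a; apply: cyl_measurable => //.
by apply: sub_all a => ib /= /andP[].
Qed.

Lemma pr_cyl_below {X k} : cyl_below X k -> pr P (cyl E X) = cyl_pr P E X.
Proof.
case/andP=> u a; apply: pr_cyl => //.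
by apply: sub_all a => i /andP[].
Qed.

Lemma pr_cyl_excl_on_split {X k M} : (k < M)%N -> cyl_below X k ->
  pr P (cyl E X `&` excl_on k M) =
    pr P (cyl E ((site k, false) :: X) `&` excl_on k.+1 M)
  + pr P (cyl E (occ k ++ X) `&` excl_on (k + occ_len k) M).
Proof.
move=> kM hX.
have e1 : cyl E X `&` (~` E (site k) `&` excl_on k.+1 M) =
    cyl E ((site k, false) :: X) `&` excl_on k.+1 M.
  by rewrite cyl_cons setIA [cyl E X `&` _]setIC.
have e2 : cyl E X `&` (cyl E (occ k) `&` excl_on (k + occ_len k) M) =
    cyl E (occ k ++ X) `&` excl_on (k + occ_len k) M.
  by rewrite cyl_cat setIA [cyl E X `&` _]setIC.
rewrite (excl_on_split kM) setIUr e1 e2 pr_disjointU //.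
- apply: measurableI; last exact: excl_on_measurable.
  exact: cyl_below_measurable (cyl_below_cons false hX).
- apply: measurableI; last exact: excl_on_measurable.
  exact: cyl_below_measurable (cyl_below_occ hX).
- apply/seteqP; split => // v [[[h0 _] _] [hc _]].
  by rewrite cyl_cat in hc; case: hc => /cyl_occ_E.
Qed.

Lemma pr_cyl_excl_on X k M : cyl_below X k ->
  pr P (cyl E X `&` excl_on k M) = cyl_pr P E X * pr P (excl_on k M).
Proof.
have [n] := ubnP (M - k); elim: n X k => // n IH X k ltMk hX.
have [kM|Mk] := ltnP k M; last first.
  by rewrite excl_on_le // setIT pr_setT mulr1 (pr_cyl_below hX).
have e0 := pr_cyl_excl_on_split kM (isT : cyl_below [::] k).
rewrite [cyl E [::]]/= setTI in e0.
have lt1 : (M - k.+1 < n)%N by lia.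
have lt2 : (M - (k + occ_len k) < n)%N by rewrite /occ_len; case: block_end; lia.
rewrite (pr_cyl_excl_on_split kM hX) e0.
rewrite !IH ?cyl_below_cons ?cyl_below_occ //.
by rewrite !cyl_pr_cons !cyl_pr_cat /cyl_pr !big_nil; ring.
Qed.

Lemma pr_excl_on_rec k M : (k < M)%N ->
  pr P (excl_on k M) =
    (1 - pr P (E (site k))) * pr P (excl_on k.+1 M)
  + cyl_pr P E (occ k) * pr P (excl_on (k + occ_len k) M).
Proof.
move=> kM; have := pr_cyl_excl_on_split kM (isT : cyl_below [::] k).
rewrite [cyl E [::]]/= setTI => ->.
rewrite !pr_cyl_excl_on ?cyl_below_cons ?cyl_below_occ // cats0.
by rewrite cyl_pr_cons /cyl_pr big_nil mulr1.
Qed.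

Local Notation p j := (pr P (E (site j))).

Let p01 j : 0 <= p j <= 1.
Proof. by rewrite pr_ge0 pr_le1 //; apply: mE; exact: site_gt0. Qed.

Lemma pr_excl_on_block n M : (n.+1 * 3 < M)%N ->
  pr P (excl_on (n * 3) M) =
    (1 - p (n * 3).+2) * (1 - p (n * 3) * p (n * 3).+1) * pr P (excl_on (n.+1 * 3) M)
  + (1 - p (n * 3)) * (1 - p (n.+1 * 3).+1) * (1 - p (n.+1 * 3).+2)
    * ((1 - p (n * 3).+1) * p (n * 3).+2 * (1 - p (n.+1 * 3))
       - p (n * 3).+1 * (1 - p (n * 3).+2) * p (n.+1 * 3))
    * pr P (excl_on (n.+2 * 3) M).
Proof.
move=> nM.
have rec k : (k < M)%N -> pr P (excl_on k M) = (1 - p k) * pr P (excl_on k.+1 M)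
    + (if block_end k then 1 - p k.+3 else 1) * ((1 - p k.+2) * ((1 - p k.+1) * p k))
      * pr P (excl_on (k + if block_end k then 4 else 3)%N M).
  move=> kM; rewrite pr_excl_on_rec // /occ /occ_len /cyl_pr.
  by case: block_end; rewrite !big_cons big_nil /= ?mul1r ?mulr1.
have /rec h0 : (n * 3 < M)%N by lia.
have /rec h1 : ((n * 3).+1 < M)%N by lia.
have /rec h2 : ((n * 3).+2 < M)%N by lia.
have /rec h3 : (n.+1 * 3 < M)%N by lia.
rewrite block_end_3n /= mul1r addn3 mul3S in h0.
rewrite block_end_3n1 /= mul1r addn3 !mul3S in h1.
rewrite block_end_3n2 /= addn4 !mul3S in h2.
rewrite block_end_3n /= mul1r addn3 mul3S in h3.
by rewrite h0 h1 h2 h3; ring.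
Qed.

Lemma pr_excl_on_ge k M : \prod_(k <= j < M) (1 - p j) <= pr P (excl_on k M).
Proof.
have [n] := ubnP (M - k); elim: n k => // n IH k ltMk.
have [kM|Mk] := ltnP k M; last by rewrite big_geq // excl_on_le // pr_setT.
rewrite pr_excl_on_rec // big_ltn //.
apply: (@le_trans _ _ ((1 - p k) * pr P (excl_on k.+1 M))).
  apply: ler_wpM2l; last by apply: IH; lia.
  by have /andP[_ ?] := p01 k; rewrite subr_ge0.
by rewrite lerDl mulr_ge0 ?pr_ge0 ?cyl_pr_occ_ge0.
Qed.

Definition excl_from k : set T := \bigcap_(j in [set j | (k <= j)%N]) excl j.

Lemma excl_from_bigcap k : excl_from k = \bigcap_L excl_on k (L.+1 * 3).
Proof.
apply/seteqP; split => v /= hv.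
  by move=> L _ j /andP[kj _]; exact: hv.
by move=> j kj; apply: (hv j) => //=; rewrite kj /=; lia.
Qed.

Lemma cvg_pr_excl_on k :
  (fun L => pr P (excl_on k (L.+1 * 3))) @ \oo --> pr P (excl_from k).
Proof.
rewrite excl_from_bigcap; apply: cvg_pr_bigcap => [L|n m nm].
  exact: excl_on_measurable.
by apply: excl_on_monotone; rewrite leq_mul2r ltnS nm orbT.
Qed.

Lemma pr_cyl_excl_from X k : cyl_below X k ->
  pr P (cyl E X `&` excl_from k) = cyl_pr P E X * pr P (excl_from k).
Proof.
move=> hX.
have lhs : (fun L => pr P (cyl E X `&` excl_on k (L.+1 * 3))) @ \oo -->
    pr P (cyl E X `&` excl_from k).
  have -> : cyl E X `&` excl_from k = \bigcap_L (cyl E X `&` excl_on k (L.+1 * 3)).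
    rewrite excl_from_bigcap; apply/seteqP; split => v /=.
      by move=> [hX' hv] L _; split => //; exact: hv.
    by move=> hv; split; [case: (hv 0%N I) | move=> L _; case: (hv L I)].
  apply: cvg_pr_bigcap => [L|n m nm].
    apply: measurableI; [exact: cyl_below_measurable hX | exact: excl_on_measurable].
  by apply: setIS; apply: excl_on_monotone; rewrite leq_mul2r ltnS nm orbT.
have eqf : (fun L => pr P (cyl E X `&` excl_on k (L.+1 * 3))) =1
            (fun L => cyl_pr P E X * pr P (excl_on k (L.+1 * 3))).
  by move=> L; rewrite pr_cyl_excl_on.
rewrite (eq_cvg _ _ eqf) in lhs.
exact: cvg_unique _ lhs (cvgM (cvg_cst _) (cvg_pr_excl_on k)).
Qed.

Lemma UV_block_excl n v : UV_block E d r n v <->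
  [/\ excl (n * 3) v, excl (n * 3).+1 v & excl (n * 3).+2 v].
Proof.
rewrite /UV_block /= /excl block_end_3n block_end_3n1 block_end_3n2 !mul3S.
rewrite !site_3n !site_3n1 !site_3n2 !addn0 /setU /setI /setC /setT /=.
have [c0|c0] := pselect (E (n * d + r)%N v);
have [c1|c1] := pselect (E (n * d + (d - r))%N v);
have [c2|c2] := pselect (E (n.+1 * d)%N v); firstorder.
Qed.

Lemma Uevt_excl_from : Uevt E d r = excl_from 0.
Proof.
apply/seteqP; split => v hv.
- move=> j _; have [n hj] := mod3_cases j.
  have [h0 h1 h2] := iffLR (UV_block_excl n v) (hv n I).
  by case: hj => ->.
- by move=> n _; apply/UV_block_excl; split; apply: hv.
Qed.

Lemma Vevt_excl_from : Vevt E d r = excl_from 3.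
Proof.
apply/seteqP; split => v hv.
- move=> j j3; have [n hj] := mod3_cases j.
  have n1 : (1 <= n)%N by move: j3; rewrite /=; case: hj => ->; lia.
  have [h0 h1 h2] := iffLR (UV_block_excl n v) (hv n n1).
  by case: hj => ->.
- move=> n /= n1; apply/UV_block_excl.
  by split; apply: hv => /=; lia.
Qed.

End Exclusion.

Section Model.
Context {R : realType} {dsp : measure_display} {T : measurableType dsp}.
Variables (P : probability T R) (E : nat -> set T) (q : R) (d r : nat).
Hypotheses (q_gt0 : 0 < q) (q_lt1 : q < 1) (r_gt0 : (0 < r)%N) (rd : (2 * r < d)%N).
Hypothesis mE : forall j, (0 < j)%N -> measurable (E j).
Hypothesis prE : forall j, (0 < j)%N -> pr P (E j) = q ^+ j / (1 + q ^+ j).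
Hypothesis E_indep : indep_events_pos P E.

Local Notation x := (q ^+ r).
Local Notation w := (q ^+ (d - r)).
Local Notation Q := (q ^+ r * q ^+ (d - r)).
Local Notation site := (site d r).
Local Notation excl_on := (excl_on E d r).
Local Notation excl_from := (excl_from E d r).

Let x_gt0 : 0 < x. Proof. exact: exprn_gt0. Qed.
Let w_gt0 : 0 < w. Proof. exact: exprn_gt0. Qed.

Lemma expr_d_split : q ^+ d = Q.
Proof. by rewrite -exprD subnKC //; lia. Qed.

Let Q_lt1 : Q < 1.
Proof. by rewrite -expr_d_split exprn_ilt1 ?ltW //; lia. Qed.

Let expr_site_mul3 n k : q ^+ (n * d + k) = Q ^+ n * q ^+ k.
Proof. by rewrite exprD mulnC exprM expr_d_split. Qed.

Lemma pr_site_3n n : pr P (E (site (n * 3))) = x * Q ^+ n / (1 + x * Q ^+ n).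
Proof. by rewrite site_3n prE ?expr_site_mul3 ?[Q ^+ n * _]mulrC //; lia. Qed.

Lemma pr_site_3n1 n : pr P (E (site (n * 3).+1)) = w * Q ^+ n / (1 + w * Q ^+ n).
Proof. by rewrite site_3n1 prE ?expr_site_mul3 ?[Q ^+ n * _]mulrC //; lia. Qed.

Lemma pr_site_3n2 n : pr P (E (site (n * 3).+2)) = Q ^+ n.+1 / (1 + Q ^+ n.+1).
Proof. by rewrite site_3n2 -[(n.+1 * d)%N]addn0 prE ?expr_site_mul3 ?expr0 ?mulr1 //; lia. Qed.

Lemma pr_excl_on_rec_ab L n : (n < L)%N ->
  pr P (excl_on (n * 3) (L.+1 * 3)) =
    rec_a x w n * pr P (excl_on (n.+1 * 3) (L.+1 * 3))
  + rec_b x w n * pr P (excl_on (n.+2 * 3) (L.+1 * 3)).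
Proof.
move=> nL; rewrite pr_excl_on_block //; last by lia.
rewrite !pr_site_3n !pr_site_3n1 !pr_site_3n2 /rec_a /rec_b /dfac !exprS.
have t0 : 0 < Q ^+ n by rewrite exprn_gt0 // mulr_gt0.
move: (Q ^+ n) t0 => t t0.
by congr (_ * _ + _ * _); field; rewrite !gt_eqF ?addr_gt0 ?mulr_gt0.
Qed.

Lemma pr_Vevt : pr P (Vevt E d r) = pr P (Uevt E d r) * (psi x w 1 * (1 + Q)).
Proof.
pose a L n := pr P (excl_on (n * 3)%N (L.+1 * 3)%N).
have a01 L n : 0 <= a L n <= 1.
  by rewrite pr_ge0 pr_le1 //; apply: excl_on_measurable.
have cas L := casorati_bound x w x_gt0 w_gt0 Q_lt1 (a L) L (a01 L) (pr_excl_on_rec_ab L).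
have z0 : zsol x w 0 = 1 by rewrite /zsol psi0 // /zfac big_ord0 mulr1.
have z1 : zsol x w 1 = psi x w 1 * (1 + Q) by rewrite /zsol /zfac big_ord1 expr1.
have aU : (fun L => pr P (excl_on 0 (L.+1 * 3))) @ \oo --> pr P (Uevt E d r).
  by rewrite Uevt_excl_from; exact: cvg_pr_excl_on.
have aV : (fun L => pr P (excl_on 3 (L.+1 * 3))) @ \oo --> pr P (Vevt E d r).
  by rewrite Vevt_excl_from //; exact: cvg_pr_excl_on.
set K := 2 * (qpoch_inv_bound Q / (1 - Q)) * (1 + Q).
have geo : (fun L => K * Q ^+ L) @ \oo --> 0.
  by have := @cvg_geometric R K Q; rewrite gtr0_norm ?mulr_gt0 // => /(_ Q_lt1).
have to0 : (fun L => a L 0 * zsol x w 1 - a L 1 * zsol x w 0) @ \oo --> 0.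
  apply: (@squeeze_cvgr _ _ _ _ (fun L => - (K * Q ^+ L)) (fun L => K * Q ^+ L)) => //.
    by apply: nearW => L; rewrite -ler_norml /K -mulrA; exact: cas.
  by rewrite -oppr0; exact: cvgN.
have lim : (fun L => a L 0 * zsol x w 1 - a L 1 * zsol x w 0) @ \oo -->
    pr P (Uevt E d r) * zsol x w 1 - pr P (Vevt E d r) * zsol x w 0.
  by apply: cvgB; apply: cvgM => //; exact: cvg_cst.
have e : pr P (Uevt E d r) * zsol x w 1 - pr P (Vevt E d r) * zsol x w 0 = 0.
  exact: cvg_unique _ lim to0.
by move: e; rewrite z0 z1 mulr1 => /subr0_eq ->.
Qed.

Lemma pr_excl_on_lower M : (expR (q / (1 - q)))^-1 <= pr P (excl_on 0 M).
Proof.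
have q01 : 0 < q < 1 by rewrite q_gt0.
apply: le_trans (@pr_excl_on_ge _ _ _ P E mE E_indep d r r_gt0 rd 0 M).
rewrite big_mkord; apply: (@le_trans _ _ (\prod_(j < M) (1 + q ^+ j.+1)^-1)).
  rewrite prodfV lef_pV2 ?posrE ?expR_gt0 //; last first.
    by apply: prodr_gt0 => j _; rewrite addr_gt0 // exprn_gt0.
  apply: le_trans (prod1D_le_expR R M (fun j => q ^+ j.+1) _) _.
    by move=> j; rewrite exprn_ge0 // ltW.
  rewrite ler_expR; apply: le_trans _ (geom_sum_le q01 M _ (ltW q_gt0)).
  by apply: ler_sum => j _; rewrite exprS.
apply: ler_prod => j _; rewrite invr_ge0 addr_ge0 ?exprn_ge0 ?(ltW q_gt0) //=.
have s0 : 0 < q ^+ site j by rewrite exprn_gt0.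
rewrite prE ?(site_gt0 r_gt0 rd) //.
have -> : 1 - q ^+ site j / (1 + q ^+ site j) = (1 + q ^+ site j)^-1.
  by field; rewrite gt_eqF // addr_gt0.
rewrite lef_pV2 ?posrE ?addr_gt0 ?exprn_gt0 // lerD2l.
by apply: ler_wiXn2l; rewrite ?ltW // (gtn_site r_gt0 rd j).
Qed.

Lemma pr_Uevt_gt0 : 0 < pr P (Uevt E d r).
Proof.
have aU : (fun L => pr P (excl_on 0 (L.+1 * 3))) @ \oo --> pr P (excl_from 0).
  exact: cvg_pr_excl_on.
have lowU : (expR (q / (1 - q)))^-1 <= pr P (Uevt E d r).
  rewrite Uevt_excl_from -(cvg_lim _ aU) //; apply: limr_ge; first exact: cvgP aU.
  by apply: nearW => L; exact: pr_excl_on_lower.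
by apply: lt_le_trans lowU; rewrite invr_gt0 expR_gt0.
Qed.

(* Emptiness of the first three sites makes their constraints in [U] vacuous,
   which leaves those of [V]. *)
Lemma pr_FFF_Uevt : pr P (~` E r `&` ~` E (d - r)%N `&` ~` E d `&` Uevt E d r) =
  pr P (Vevt E d r) / ((1 + x) * (1 + w) * (1 + Q)).
Proof.
pose X3 := [:: (site 2, false); (site 1, false); (site 0, false)].
have s0 : site 0 = r by have := @site_3n d r 0; rewrite mul0n add0n.
have s1 : site 1 = (d - r)%N by have := @site_3n1 d r 0; rewrite mul0n add0n.
have s2 : site 2 = d by have := @site_3n2 d r 0; rewrite mul1n.
have hX3 : cyl_below d r X3 3.
  by rewrite /X3; do 3 apply: (cyl_below_cons d r r_gt0 rd).
have -> : ~` E r `&` ~` E (d - r)%N `&` ~` E d `&` Uevt E d r = cyl E X3 `&` excl_from 3.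
  rewrite Uevt_excl_from /X3 /cyl /lit /= s0 s1 s2; apply/seteqP; split => v /=.
    by move=> [[[h0 h1] h2] hU]; split; [tauto | move=> j _; apply: hU].
  move=> [[h2 [h1 [h0 _]]] hU]; split => // j _.
  case: (ltnP j 3) => j3; last by apply: hU.
  by rewrite /excl; left; case: j j3 => [|[|[|j]]] // _; rewrite ?s0 ?s1 ?s2.
rewrite pr_cyl_excl_from // -Vevt_excl_from // /cyl_pr /X3 !big_cons big_nil /lit_pr /=.
rewrite s0 s1 s2 !prE //; try lia.
rewrite expr_d_split; field.
by rewrite !gt_eqF ?addr_gt0 ?mulr_gt0.
Qed.

Let psi1_gt0 : 0 < psi x w 1.
Proof. exact: lt_le_trans ltr01 (psi_ge1 _ _ x_gt0 w_gt0 Q_lt1 1). Qed.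

Lemma condpr_Uevt_Vevt :
  condpr P (Uevt E d r) (Vevt E d r) = (psi x w 1 * (1 + Q))^-1.
Proof.
rewrite /condpr (setIidl (_ : Uevt E d r `<=` Vevt E d r)) ?pr_Vevt; last first.
  by rewrite Uevt_excl_from Vevt_excl_from // => v hv j _; exact: hv.
field.
by rewrite !gt_eqF ?pr_Uevt_gt0 ?addr_gt0 ?mulr_gt0.
Qed.

Lemma condpr_FFF_Uevt :
  condpr P (~` E r `&` ~` E (d - r)%N `&` ~` E d) (Uevt E d r) = psi x w 1 / dfac x w 0.
Proof.
rewrite /condpr pr_FFF_Uevt pr_Vevt /dfac expr0 !mulr1; field.
by rewrite !gt_eqF ?pr_Uevt_gt0 ?addr_gt0 ?mulr_gt0.
Qed.

Lemma cvg_series_g3 :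
  series (g3_term (- q ^+ r) (q ^+ d)) @ \oo --> psi x w 1 / dfac x w 0.
Proof. by rewrite expr_d_split; exact: cvg_series_g3_term. Qed.

End Model.

Theorem theorem4p1 (R : realType) (dsp : measure_display)
  (T : measurableType dsp) (P : probability T R)
  (q : R) (d r : nat) (E : nat -> set T) :
  0 < q -> q < 1 -> (3 <= d)%N -> (1 <= r)%N -> (2 * r < d)%N ->
  (forall j, (0 < j)%N -> measurable (E j)) ->
  (forall j, (0 < j)%N -> pr P (E j) = q ^+ j / (1 + q ^+ j)) ->
  indep_events_pos P E ->
  condpr P (Uevt E d r) (Vevt E d r) =
    1 / ((1 + q ^+ r) * (1 + q ^+ (d - r)) * (1 + q ^+ d))
      * (1 / g3 (- q ^+ r) (q ^+ d))
  /\
  series (g3_term (- q ^+ r) (q ^+ d)) @ \oo -->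
    condpr P (~` E r `&` ~` E (d - r)%N `&` ~` E d) (Uevt E d r).
Proof.
(* [3 <= d] follows from [1 <= r] and [2 * r < d]. *)
move=> q_gt0 q_lt1 _ r_gt0 rd mE prE E_indep.
have g3_lim := cvg_series_g3 _ _ _ q_gt0 q_lt1 r_gt0 rd.
split; last by rewrite (condpr_FFF_Uevt P E q d r).
have x_gt0 : 0 < q ^+ r by rewrite exprn_gt0.
have w_gt0 : 0 < q ^+ (d - r) by rewrite exprn_gt0.
have Q_lt1 : q ^+ r * q ^+ (d - r) < 1.
  by rewrite -expr_d_split // exprn_ilt1 ?ltW //; lia.
have psi1_gt0 := lt_le_trans ltr01 (psi_ge1 _ _ x_gt0 w_gt0 Q_lt1 1).
rewrite (condpr_Uevt_Vevt P E q d r) // /g3 (cvg_lim _ g3_lim) // (expr_d_split q d r) // /dfac.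
rewrite expr0 !mulr1; field.
by rewrite !gt_eqF ?addr_gt0 ?mulr_gt0.
Qed.
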